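(* Let $E$ be a concurrent execution, in which each operation has an invocation time and, if it is complete, a later response time; an incomplete operation never ends. Partition all the complete operations of $E$, together with an arbitrary subset of the incomplete operations of $E$, into two sets $A$ and $B$. Build a total order $L$ as follows. (1) For each operation in $A$, choose a point in time inside its interval of execution (at or after its invocation, and at or before its response if it has one). Order the operations of $A$ in $L$ according to these chosen points. (2) Then consider the operations of $B$ one at a time, in increasing order of their invocation times in $E$. For the operation $op$ currently considered, let $op'$ be the operation that comes earliest in $L$ among those already placed in $L$ that are invoked in $E$ after $op$ ends in $E$. Insert $op$ into $L$ immediately before $op'$. If no such $op'$ exists, append $op$ to the end of $L$. Then $L$ respects the real-time order of $E$: whenever $op_1$ and $op_2$ are operations placed in $L$ and $op_1$ ends in $E$ before $op_2$ is invoked, $op_1$ precedes $op_2$ in $L$. *)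

From mathcomp Require Import all_boot all_order all_algebra.
Set Implicit Arguments. Unset Strict Implicit. Unset Printing Implicit Defensive.
Import Order.TTheory GRing.Theory Num.Theory.
Local Open Scope ring_scope.

Section Exec.
Variables (R : realDomainType) (T : eqType).
(* inv o : invocation time of o; resp o = Some r : response time r of a
   complete operation, resp o = None : o is incomplete (never ends). *)
Variables (inv : T -> R) (resp : T -> option R).

Definition ends_before (o1 o2 : T) : bool :=
  if resp o1 is Some r then r < inv o2 else false.

(* Step (2) for one operation op: insert op immediately before the earliest
   op' in L invoked after op ends; append if there is none
   (find returns size L in that case). *)
Definition insertB (L : seq T) (op : T) : seq T :=
  let i := find (ends_before op) L in take i L ++ op :: drop i L.

Definition buildL (sA sB : seq T) : seq T := foldl insertB sA sB.
End Exec.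

From mathcomp Require Import all_boot all_order all_algebra.
From mathcomp Require Import zify.
Set Implicit Arguments. Unset Strict Implicit.
Import Order.TTheory GRing.Theory Num.Theory.
Local Open Scope ring_scope.

(* "Ends before" is transitive, because the middle operation's response comes
   after its invocation.  Hence inserting op right before the first element of
   L that it ends before keeps L consistent with real time: every element that
   ends before op ends before that element too, so it already sits in front of
   it.  Each insertion preserves the invariant whatever the processing order. *)

Lemma index_insert (T : eqType) (L : seq T) (i : nat) (x : T) :
  (i <= size L)%N -> x \notin L -> index x (take i L ++ x :: drop i L) = i.
Proof.
move=> le_i_L xL; rewrite index_cat size_takel //= eqxx addn0.
by case: ifP => // /mem_take xL'; rewrite xL' in xL.
Qed.

Lemma index_insert_other (T : eqType) (L : seq T) (i : nat) (x y : T) :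
  (i <= size L)%N -> x \notin L -> y \in L ->
  index y (take i L ++ x :: drop i L) = (index y L + (i <= index y L))%N.
Proof.
move=> le_i_L xL yL.
have xy : (x == y) = false by apply/negbTE; apply: contraNneq xL => ->.
have -> : index y L = index y (take i L ++ drop i L) by rewrite cat_take_drop.
rewrite !index_cat /= xy size_takel //.
case: ifP => [yi | _]; last by rewrite leq_addr addn1 addnS.
have := index_mem y (take i L); rewrite yi size_takel // => /= lt_yi.
by rewrite leqNgt lt_yi addn0.
Qed.

Lemma sorted_key_index_lt (T : eqType) (d : Order.disp_t) (U : porderType d)
    (f : T -> U) (s : seq T) (x y : T) :
  sorted (fun a b => (f a <= f b)%O) s -> x \in s -> y \in s ->
  (f x < f y)%O -> (index x s < index y s)%N.
Proof.
move=> s_sorted xs ys fxy; rewrite ltnNge; apply/negP => le_yx.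
have f_le : transitive (fun a b => (f a <= f b)%O) by move=> ? ? ?; apply: le_trans.
have := sorted_leq_nth f_le (fun a => lexx (f a)) x s_sorted.
move=> /(_ (index y s) (index x s)); rewrite !inE !index_mem !nth_index //.
by move=> /(_ ys xs le_yx) fyx; move: (lt_le_trans fxy fyx); rewrite ltxx.
Qed.

Section RealTimeOrder.
Variables (R : realDomainType) (T : eqType).
Variables (inv : T -> R) (resp : T -> option R).
Hypothesis resp_gt_inv : forall o r, resp o = Some r -> inv o < r.

Local Notation ends_before := (ends_before inv resp).
Local Notation insertB := (insertB inv resp).

Definition real_time_ordered (L : seq T) : Prop :=
  {in L &, forall o1 o2, ends_before o1 o2 -> (index o1 L < index o2 L)%N}.

Lemma ends_before_irr (o : T) : ends_before o o = false.
Proof.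
rewrite /ends_before; case E: (resp o) => [r|] //.
by apply/negbTE; rewrite -leNgt ltW // (resp_gt_inv E).
Qed.

Lemma ends_before_trans : transitive ends_before.
Proof.
move=> y x z; rewrite /ends_before.
case Ex: (resp x) => [rx|] //; case Ey: (resp y) => [ry|] // rx_y ry_z.
exact: lt_trans rx_y (lt_trans (resp_gt_inv Ey) ry_z).
Qed.

Lemma perm_insertB (L : seq T) (op : T) : perm_eq (insertB L op) (op :: L).
Proof.
rewrite /insertB -[in X in perm_eq _ X](cat_take_drop (find (ends_before op) L) L).
by rewrite -cat1s perm_catCA.
Qed.

Lemma insertB_real_time_ordered (L : seq T) (op : T) :
  op \notin L -> real_time_ordered L -> real_time_ordered (insertB L op).
Proof.
move=> opL ordL; rewrite /insertB; set i := find _ L.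
have le_i_L : (i <= size L)%N by apply: find_size.
have i_le_later o : o \in L -> ends_before op o -> (i <= index o L)%N.
  move=> oL op_o; rewrite leqNgt; apply/negP => /(before_find o).
  by rewrite nth_index // op_o.
have earlier_lt_i o : o \in L -> ends_before o op -> (index o L < i)%N.
  move=> oL o_op; rewrite ltnNge; apply/negP => i_le_o.
  have lt_i_L : (i < size L)%N by rewrite (leq_ltn_trans i_le_o) ?index_mem.
  set x := nth op L i.
  have xL : x \in L by rewrite mem_nth.
  have o_x : ends_before o x.
    by apply: ends_before_trans o_op _; apply: nth_find; rewrite has_find.
  have := ordL _ _ oL xL o_x; have := index_nth op lt_i_L; rewrite -/x; lia.
have memI o : (o \in take i L ++ op :: drop i L) = (o == op) || (o \in L).
  by rewrite mem_cat inE orbCA -mem_cat cat_take_drop.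
move=> o1 o2; rewrite !memI.
case/orP=> [/eqP-> | o1L]; case/orP=> [/eqP-> | o2L].
- by rewrite ends_before_irr.
- move=> /(i_le_later _ o2L) le_i2.
  by rewrite index_insert // index_insert_other // le_i2; lia.
- move=> /(earlier_lt_i _ o1L) lt_1i.
  by rewrite index_insert // index_insert_other // (leqNgt i) lt_1i; lia.
- move=> /(ordL _ _ o1L o2L); rewrite !index_insert_other //.
  case: (leqP i (index o1 L)); case: (leqP i (index o2 L)); lia.
Qed.

Lemma buildL_real_time_ordered (sA sB : seq T) :
  uniq (sA ++ sB) -> real_time_ordered sA ->
  real_time_ordered (buildL inv resp sA sB).
Proof.
elim: sB sA => [|op sB IH] sA //= uniq_AB ordA.
have opA : op \notin sA.
  by move: uniq_AB; rewrite cat_uniq /= negb_or => /and4P[_ /andP[]].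
apply: IH; last exact: insertB_real_time_ordered.
rewrite (perm_uniq (perm_cat (perm_insertB sA op) (perm_refl sB))).
by rewrite cat_cons -cat1s uniq_catCA.
Qed.

End RealTimeOrder.

Theorem lemma1 (R : realDomainType) (T : finType)
    (inv : T -> R) (resp : T -> option R)
    (* a complete operation responds after it is invoked *)
    (Hwf : forall o r, resp o = Some r -> inv o < r)
    (* sA : the operations of A, sB : the operations of B *)
    (sA sB : seq T)
    (* A and B are disjoint and duplicate-free *)
    (Huniq : uniq (sA ++ sB))
    (* every complete operation lies in A or B *)
    (Hcomplete : forall o, resp o != None -> o \in sA ++ sB)
    (* chosen points inside the execution intervals of the operations of A *)
    (pt : T -> R)
    (Hpt_inv : forall o, o \in sA -> inv o <= pt o)
    (Hpt_resp : forall o r, o \in sA -> resp o = Some r -> pt o <= r)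
    (* sA orders A according to the chosen points *)
    (HsA : sorted (fun x y => pt x <= pt y) sA)
    (* sB lists B in increasing order of invocation times *)
    (HsB : sorted (fun x y => inv x <= inv y) sB) :
  let L := buildL inv resp sA sB in
  forall o1 o2, o1 \in L -> o2 \in L ->
    ends_before inv resp o1 o2 -> (index o1 L < index o2 L)%N.
Proof.
apply: buildL_real_time_ordered => // o1 o2 o1A o2A.
rewrite /ends_before; case E: (resp o1) => [r|] // r_o2.
apply: (sorted_key_index_lt HsA o1A o2A).
exact: le_lt_trans (Hpt_resp _ _ o1A E) (lt_le_trans r_o2 (Hpt_inv _ o2A)).
Qed.
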